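(* Let $G=AB$ be a finite $\pi$-separable group that is the product of subgroups $A$ and $B$. Then $|x^G|$ is a $\pi'$-number for each $\pi$-element $x\in A\cup B$ of prime power order if and only if the Hall $\pi$-subgroups of $G$ are abelian. Moreover, if this occurs, then the $\pi$-length of $G$ is at most $1$.
   Context: $\pi$ is a set of primes, $\pi'$ its complement; a $\pi'$-number is a positive integer with no prime divisor in $\pi$; $|x^G|=|G:C_G(x)|$. *)

From mathcomp Require Import all_boot all_fingroup all_solvable.
Set Implicit Arguments. Unset Strict Implicit. Unset Printing Implicit Defensive.
Local Open Scope group_scope.

Definition pi_separable (pi : nat_pred) (gT : finGroupType) (G : {group gT}) : Prop :=
  exists s : seq {group gT},
    [/\ all (fun H : {group gT} => H <| G) s,
        path (fun H K : {group gT} =>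
                (H <| K) && (pi.-group (K / H) || pi^'.-group (K / H)))
             1%G s
      & last 1%G s = G].

(* The upper pi-series  1 <= O_pi'(G) <= O_{pi',pi}(G) <= O_{pi',pi,pi'}(G) <= ...
   with n pi-steps is 'O_{pi', pi, pi', ..., pi, pi'}(G) (n occurrences of pi). *)
Definition upper_pi_preds (pi : nat_pred) (n : nat) : seq nat_pred :=
  pi^' :: flatten (nseq n [:: (pi : nat_pred); pi^']).

Definition pi_length_le (pi : nat_pred) (n : nat) (gT : finGroupType) (G : {group gT}) : Prop :=
  pseries (upper_pi_preds pi n) G = G.

(* Let N = O_pi'(G) and M/N = O_pi(G/N). For pi-separable G the Hall-Higman
   lemma gives C_{G/N}(M/N) <= M/N. If x has a pi'-number of conjugates, the
   normal pi-subgroup M/N lies in C_{G/N}(xN), which has pi'-index, so xN is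
   in Z(M/N). Applying this to the p-parts of elements
   of Sylow subgroups of A and B (p in pi) and using G = AB shows that Z(M/N)
   has pi'-index in G/N, hence is an abelian Hall pi-subgroup of G/N, and the
   Hall pi-subgroups of G embed in G/N. Conversely, if a Hall pi-subgroup H is
   abelian then HN/N centralizes M/N, so M/N = HN/N is a normal Hall subgroup
   of G/N (pi-length 1); by Schur-Zassenhaus every pi-element lies in a
   conjugate of H, which then centralizes it. *)

From mathcomp Require Import all_boot all_fingroup all_solvable.
Set Implicit Arguments. Unset Strict Implicit. Unset Printing Implicit Defensive.
Local Open Scope group_scope.

Section PiSeparable.

Variable pi : nat_pred.

Lemma upper_pi_predsS n :
  upper_pi_preds pi n.+1 = rcons (rcons (upper_pi_preds pi n) pi) pi^'.
Proof.
rewrite /upper_pi_preds -!cats1 /= -catA; congr (_ :: _).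
by elim: n => //= n ->.
Qed.

Lemma sub_pseries_rcons (gT : finGroupType) (pis : seq nat_pred) rho
    (G X Y : {group gT}) :
  X \subset pseries pis G -> Y <| G -> X <| Y -> rho.-group (Y / X) ->
  Y \subset pseries (rcons pis rho) G.
Proof.
move=> sXP nsYG nsXY rhoYX.
have nPY : Y \subset 'N(pseries pis G) := subset_trans (normal_sub nsYG) (gFnorm _ _).
rewrite pseries_rcons /pcore_mod -sub_morphim_pre //.
apply: pcore_max; last exact: quotient_normal.
apply: pnat_dvd rhoYX; rewrite !card_quotient ?(normal_norm nsXY) //.
by rewrite -indexgI; apply: indexgS; rewrite subsetI normal_sub.
Qed.

Lemma pseries_rcons_id_pgroup (gT : finGroupType) (pis : seq nat_pred) rho
    (G : {group gT}) :
  rho.-group (G / pseries pis G) -> pseries (rcons pis rho) G = G.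
Proof.
move=> rhoG; rewrite pseries_rcons /pcore_mod pcore_pgroup_id //.
by rewrite quotientGK ?pseries_normal.
Qed.

Definition pi_series_step (gT : finGroupType) (H K : {group gT}) :=
  (H <| K) && (pi.-group (K / H) || pi^'.-group (K / H)).

Lemma last_pi_series_sub (gT : finGroupType) (G X : {group gT}) s k :
  {subset s <= [pred H : {group gT} | H <| G]} ->
  path (@pi_series_step gT) X s ->
  X \subset pseries (upper_pi_preds pi k) G ->
  last X s \subset pseries (upper_pi_preds pi (k + size s)) G.
Proof.
elim: s X k => [|Y s IHs] X k nsG /=; first by rewrite addn0.
case/andP=> /andP[nsXY rhoYX] path_s sXP.
have nsYG : Y <| G by apply: nsG; rewrite inE eqxx.
rewrite addnS -addSn; apply: IHs path_s _ => [H sH|].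
  by apply: nsG; rewrite inE sH orbT.
rewrite upper_pi_predsS; case/orP: rhoYX => rhoYX.
  rewrite -[rcons (rcons _ pi) _]cats1.
  exact: subset_trans (sub_pseries_rcons sXP nsYG nsXY rhoYX) (pseries_sub_catl _ _ _).
apply: sub_pseries_rcons nsYG nsXY rhoYX.
by apply: subset_trans sXP _; rewrite -cats1 pseries_sub_catl.
Qed.

Lemma pi_separable_length (gT : finGroupType) (G : {group gT}) :
  pi_separable pi G -> exists n, pi_length_le pi n G.
Proof.
case=> s [/allP nsG path_s lastG]; exists (size s).
apply/eqP; rewrite eqEsubset pseries_sub /=.
have := last_pi_series_sub nsG path_s (sub1G (pseries (upper_pi_preds pi 0) G)).
by rewrite lastG.
Qed.

Lemma morphim_pi_length (gT rT : finGroupType) (D G : {group gT})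
    (f : {morphism D >-> rT}) n :
  pi_length_le pi n G -> pi_length_le pi n (f @* G).
Proof.
move=> lenG; apply/eqP; rewrite eqEsubset pseries_sub /=.
by have := pmorphimF (pseries_pgFun (upper_pi_preds pi n)) G f; rewrite /= lenG.
Qed.

Lemma pi_lengthS (gT : finGroupType) (G H : {group gT}) n :
  H \subset G -> pi_length_le pi n G -> pi_length_le pi n H.
Proof.
move=> sHG lenG; apply/eqP; rewrite eqEsubset pseries_sub /=.
have := gFhereditary (pseries_pgFun (upper_pi_preds pi n)) sHG.
by rewrite /= lenG (setIidPr sHG).
Qed.

Lemma pi_length_trivg (gT : finGroupType) (G : {group gT}) n :
  pi_length_le pi n G -> 'O_pi(G) = 1 -> 'O_pi^'(G) = 1 -> G :=: 1.
Proof.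
move=> lenG O1 O'1; rewrite -lenG {lenG}; elim: n => [|n IHn].
  by rewrite pseries1.
by rewrite -[upper_pi_preds pi n.+1]/(pi^' :: pi :: upper_pi_preds pi n)
  pseries_pop // pseries_pop.
Qed.

Lemma central_pcore_mul_p'core (gT : finGroupType) (W Z : {group gT}) :
  Z <| W -> pi.-group Z -> pi^'.-group (W / Z) -> W \subset 'C(Z) ->
  Z * 'O_pi^'(W) = W.
Proof.
move=> nsZW piZ pi'WZ cZW; have [sZW nZW] := andP nsZW.
have hallZ : Hall W Z by rewrite /Hall sZW -card_quotient // (pnat_coprime piZ).
have [L /complP[tiZL defW]] := splitsP (SchurZassenhaus_split hallZ nsZW).
have sLW : L \subset W by rewrite -defW mulG_subr.
have nZL : L \subset 'N(Z) := subset_trans sLW nZW.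
have nsLW : L <| W.
  rewrite /normal sLW -defW mul_subG ?normG // (subset_trans _ (cent_sub L)) //.
  by rewrite centsC (subset_trans sLW cZW).
have pi'L : pi^'.-group L.
  by rewrite (isog_pgroup _ (sdprod_isog (etrans (sdprodE nZL tiZL) defW))).
apply/eqP; rewrite eqEsubset mul_subG ?pcore_sub //=.
by rewrite -{1}defW mulgS // pcore_max.
Qed.

(* Hall-Higman, Lemma 1.2.3. With D = C_G(O_pi(G)), O_pi(D) is central in D,
   so by Schur-Zassenhaus O_{pi,pi'}(D) = O_pi(D) * O_pi'(G) = O_pi(D); as D
   has finite pi-length, this forces D = O_pi(D). *)
Lemma cent_pcore_sub (gT : finGroupType) (G : {group gT}) n :
  pi_length_le pi n G -> 'O_pi^'(G) = 1 -> 'C_G('O_pi(G)) \subset 'O_pi(G).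
Proof.
move=> lenG O'1; set M := 'O_pi(G); set D := 'C_G(M)%G.
have nsDG : D <| G.
  by have := subcent_normal G M; rewrite (setIidPl (normal_norm (pcore_normal _ _))).
set Z := 'O_pi(D)%G; set W := 'O_{pi, pi^'}(D)%G.
have sZM : Z \subset M by rewrite /Z /= -(pcore_setI_normal pi nsDG) subsetIl.
have nsWG : W <| G := char_normal_trans (pseries_char _ _) nsDG.
have sZW : Z \subset W.
  by have := pseries_sub_catl [:: pi] [:: pi^'] D; rewrite pseries1.
have nsZW : Z <| W by rewrite /normal sZW (subset_trans (pseries_sub _ _) (gFnorm _ _)).
have defWZ : W / Z = 'O_pi^'(D / Z) := quotient_pseries2 _ _ _.
have cZW : W \subset 'C(Z).
  exact: subset_trans (pseries_sub _ _) (subset_trans (subsetIr _ _) (centS sZM)).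
have W'1 : 'O_pi^'(W) = 1.
  apply/trivgP; rewrite -O'1 pcore_max ?pcore_pgroup //.
  exact: char_normal_trans (pcore_char _ _) nsWG.
have defW : W :=: Z.
  rewrite -(central_pcore_mul_p'core nsZW (pcore_pgroup _ _)) ?W'1 ?mulg1 //.
  by rewrite defWZ pcore_pgroup.
have /eqP : D / Z :=: 1.
  apply: (pi_length_trivg (morphim_pi_length _ (pi_lengthS (normal_sub nsDG) lenG))).
    exact: trivg_pcore_quotient.
  by rewrite -defWZ defW trivg_quotient.
by rewrite -subG1 quotient_sub1 ?gFnorm // => /subset_trans->.
Qed.

Lemma cosetpre_pHall (gT : finGroupType) (G N : {group gT})
    (K : {group coset_of N}) :
  N <| G -> pi.-group N -> pi.-Hall(G / N) K -> pi.-Hall(G) (coset N @*^-1 K).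
Proof.
move=> nsNG piN hallK.
by rewrite -(pquotient_pHall piN nsNG (normal_cosetpre K)) cosetpreK.
Qed.

Lemma p'group_quotient_pHall_exists (gT : finGroupType) (G N : {group gT})
    (K : {group coset_of N}) :
  N <| G -> pi^'.-group N -> pi.-Hall(G / N) K ->
  exists H : {group gT}, pi.-Hall(G) H.
Proof.
move=> nsNG pi'N hallK; have nNG := normal_norm nsNG.
set KK := (coset N @*^-1 K)%G.
have nsNKK : N <| KK := normal_cosetpre K.
have sKKG : KK \subset G by rewrite sub_cosetpre_quo ?(pHall_sub hallK).
have defK : KK / N = K := cosetpreK K.
have piKKN : pi.-group (KK / N) by rewrite defK (pHall_pgroup hallK).
have hallN : Hall KK N.
  rewrite /Hall normal_sub // -card_quotient ?normal_norm //.
  by rewrite coprime_sym (pnat_coprime piKKN).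
have [L /complP[tiNL defKK]] := splitsP (SchurZassenhaus_split hallN nsNKK).
have sLKK : L \subset KK by rewrite -defKK mulG_subr.
have nNL : L \subset 'N(N) := subset_trans sLKK (normal_norm nsNKK).
exists L; apply/and3P; split; first exact: subset_trans sLKK sKKG.
  by rewrite (isog_pgroup _ (sdprod_isog (etrans (sdprodE nNL tiNL) defKK))).
have iKKL : #|KK : L| = #|N|.
  apply/eqP; rewrite -(eqn_pmul2l (cardG_gt0 L)) Lagrange // mulnC.
  by rewrite -(TI_cardMg tiNL) defKK.
rewrite -(Lagrange_index sKKG sLKK) pnatM iKKL [_.-nat #|N|]pi'N andbT.
rewrite -(index_quotient_eq _ sKKG nNG) ?defK; first by have [] := and3P hallK.
by rewrite subIset // (normal_sub nsNKK) orbT.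
Qed.

Lemma pi_length_Hall_exists (gT : finGroupType) (G : {group gT}) n :
  pi_length_le pi n G -> exists H : {group gT}, pi.-Hall(G) H.
Proof.
have [m] := ubnP #|G|; elim: m gT G => // m IHm gT G /ltnSE leGm lenG.
have IHquo (N : {group gT}) : N <| G -> N :!=: 1 ->
    exists K : {group coset_of N}, pi.-Hall(G / N) K.
  move=> nsNG ntN; apply: IHm (morphim_pi_length _ lenG).
  exact: leq_trans (ltn_quotient ntN (normal_sub nsNG)) leGm.
have [O'1 | ntO'] := eqVneq 'O_pi^'(G) 1.
  have [O1 | ntO] := eqVneq 'O_pi(G) 1.
    by exists 1%G; rewrite (pi_length_trivg lenG O1 O'1) pHallE sub1G cards1 partn1.
  have [K hallK] := IHquo _ (pcore_normal _ _) ntO.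
  exists (coset _ @*^-1 K)%G.
  by apply: cosetpre_pHall hallK; rewrite ?pcore_normal ?pcore_pgroup.
have [K hallK] := IHquo _ (pcore_normal _ _) ntO'.
exact: p'group_quotient_pHall_exists (pcore_normal _ _) (pcore_pgroup _ _) hallK.
Qed.

Lemma normal_pgroup_sub_p'index (gT : finGroupType) (X M C : {group gT}) :
  M <| X -> pi.-group M -> C \subset X -> pi^'.-nat #|X : C| -> M \subset C.
Proof.
move=> nsMX piM sCX pi'XC; have [sMX nMX] := andP nsMX.
have iMC : #|M : C| = 1%N.
  apply: pnat_1 (pnat_dvd (dvdn_indexg _ _) piM) (pnat_dvd _ pi'XC).
  rewrite -indexMg -norm_joinEl ?(subset_trans sCX nMX) //.
  by apply: indexSg; rewrite ?joing_subl // join_subG sCX.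
by rewrite -(index1g (subsetIl M C)) ?indexgI ?subsetIr.
Qed.

Lemma pnat_class_quotient (gT : finGroupType) (G N : {group gT}) x :
  N <| G -> x \in G -> pi.-nat #|x ^: G| -> pi.-nat #|coset N x ^: (G / N)|.
Proof.
move=> nsNG Gx; have nNG := normal_norm nsNG; rewrite -!index_cent1.
apply: pnat_dvd; apply: dvdn_trans (_ : _ %| #|G / N : 'C_G[x] / N|) _.
  apply: indexgS; rewrite subsetI quotientS ?subsetIl //=.
  exact: morphim_cent1s (subsetP nNG x Gx) (subsetIr _ _).
by apply: index_quotient; rewrite subIset ?nNG.
Qed.

Lemma pnat_index_mul_normal (gT : finGroupType) (G X Y Z : {group gT}) :
  X * Y = G -> Z <| G -> pi.-nat #|X : Z| -> pi.-nat #|Y : Z| ->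
  pi.-nat #|G : Z|.
Proof.
move=> defG nsZG piXZ piYZ; have nZG := normal_norm nsZG.
have sXG : X \subset G by rewrite -defG mulG_subl.
have sYG : Y \subset G by rewrite -defG mulG_subr.
rewrite -card_quotient // -defG quotientMl ?(subset_trans sXG) //.
apply: pnat_dvd (_ : _ %| #|X / Z| * #|Y / Z|) _.
  by rewrite mul_cardG dvdn_mulr.
by rewrite pnatM !card_quotient ?piXZ ?piYZ ?(subset_trans sXG) ?(subset_trans sYG).
Qed.

Lemma p'index_Sylow_sub (gT : finGroupType) (X Z : {group gT}) :
    (forall p, prime p -> p \in pi ->
       exists2 S : {group gT}, p.-Sylow(X) S & S \subset Z) ->
  pi^'.-nat #|X : Z|.
Proof.
move=> sylZ; apply/pnatP=> // p p_pr p_dv_XZ; apply/negP=> pi_p.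
have [S /and3P[sSX _ p'XS] sSZ] := sylZ p p_pr pi_p.
have /pnatP/(_ p p_pr) : p^'.-nat #|X : Z|.
  apply: pnat_dvd p'XS; rewrite -indexgI; apply: indexgS.
  by rewrite subsetI sSX.
by move/(_ (indexg_gt0 _ _) p_dv_XZ); rewrite !inE eqxx.
Qed.

Lemma pi_length_le1_pcore_Hall (gT : finGroupType) (G : {group gT}) :
  pi.-Hall(G / 'O_pi^'(G)) 'O_pi(G / 'O_pi^'(G)) -> pi_length_le pi 1 G.
Proof.
move=> hallM; apply: (@pseries_rcons_id_pgroup _ [:: pi^'; pi]).
have sNP : 'O_pi^'(G) \subset 'O_{pi^', pi}(G).
  by have := pseries_sub_catl [:: pi^'] [:: pi] G; rewrite pseries1.
rewrite /pgroup card_quotient ?gFnorm //.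
rewrite -(index_quotient_eq (H := 'O_pi^'(G)%G) _ (pseries_sub _ _) (gFnorm _ _)).
  by rewrite quotient_pseries2; have [] := and3P hallM.
by rewrite subIset ?sNP ?orbT.
Qed.

Lemma abelian_coprime_quotient (gT : finGroupType) (H N : {group gT}) :
  coprime #|N| #|H| -> H \subset 'N(N) -> abelian (H / N) -> abelian H.
Proof.
by move=> coNH nNH; rewrite (isog_abelian (quotient_isog nNH (coprime_TIg coNH))).
Qed.

(* Both <[x]> and H :&: N<*><[x]> complement N in N<*><[x]>, so they are
   conjugate by Schur-Zassenhaus. *)
Lemma pi_elt_mem_conj (gT : finGroupType) (N H : {group gT}) x :
    pi^'.-group N -> pi.-group H -> H \subset 'N(N) -> pi.-elt x ->
  x \in N * H -> exists2 y, y \in N & x \in H :^ y.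
Proof.
move=> pi'N piH nNH pi_x; rewrite -norm_joinEr // => NHx.
have nN_NH : N <*> H \subset 'N(N) by rewrite join_subG normG.
have nNx : <[x]> \subset 'N(N) by rewrite cycle_subG (subsetP nN_NH).
set K := (N <*> <[x]>)%G.
have sKNH : K \subset N <*> H by rewrite join_subG joing_subl cycle_subG.
set B0 := (H :&: K)%G.
have defNB0 : N * B0 = K.
  by rewrite group_modl ?joing_subl // -norm_joinEr // (setIidPr sKNH).
have coNB0 : coprime #|N| #|B0|.
  by rewrite coprime_sym (pnat_coprime (pgroupS (subsetIl _ _) piH) pi'N).
have coNx : coprime #|N| #|<[x]>| by rewrite coprime_sym (pnat_coprime pi_x pi'N).
have cardB0 : #|<[x]>| = #|B0|.
  apply/eqP; rewrite -(eqn_pmul2l (cardG_gt0 N)) -(TI_cardMg (coprime_TIg coNB0)).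
  by rewrite -(TI_cardMg (coprime_TIg coNx)) defNB0 -norm_joinEr.
have sB0 : B0 \subset <[x]> <*> N by rewrite joingC subsetIr.
have [y Ny defB0] :=
  SchurZassenhaus_trans_actsol (abelian_sol (cycle_abelian x)) nNx sB0 coNx cardB0.
exists y^-1; first by rewrite groupV.
rewrite mem_conjgV; apply: (subsetP (subsetIl H K)).
by rewrite -[H :&: K]/(gval B0) defB0 memJ_conjg cycle_id.
Qed.

End PiSeparable.

Section AbelianHall.

Variables (pi : nat_pred) (gT : finGroupType) (G : {group gT}) (n : nat).
Hypothesis lenG : pi_length_le pi n G.

Local Notation N := 'O_pi^'(G).
Local Notation Gbar := (G / 'O_pi^'(G)).
Local Notation Mbar := 'O_pi(G / 'O_pi^'(G)).

Definition pi_ppow_p'class (C : {set gT}) :=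
  forall x, x \in C -> pi.-elt x -> (exists p e, prime p /\ #[x] = (p ^ e)%N) ->
    pi^'.-nat #|x ^: G|.

Lemma cent_pcore_quotient_sub : 'C_Gbar(Mbar) \subset Mbar.
Proof. exact: cent_pcore_sub (morphim_pi_length _ lenG) (trivg_pcore_quotient _ _). Qed.

Lemma coset_p'class_center x :
  x \in G -> pi^'.-nat #|x ^: G| -> coset N x \in 'Z(Mbar).
Proof.
move=> Gx pi'xG; have Gbar_x : coset N x \in Gbar by apply: mem_quotient.
have pi'C : pi^'.-nat #|Gbar : 'C_Gbar[coset N x]|.
  by rewrite index_cent1 (pnat_class_quotient (pcore_normal _ _) Gx).
have sMC := normal_pgroup_sub_p'index (pcore_normal _ _) (pcore_pgroup _ _)
  (subsetIl _ _) pi'C.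
have cMx : coset N x \in 'C(Mbar).
  by rewrite -sub_cent1 (subset_trans sMC) ?subsetIr.
apply/setIP; split=> //; apply: (subsetP cent_pcore_quotient_sub).
by rewrite inE Gbar_x.
Qed.

Lemma p'index_center_pcore_quotient (C : {group gT}) :
  C \subset G -> pi_ppow_p'class C -> pi^'.-nat #|C / N : 'Z(Mbar)|.
Proof.
move=> sCG pi'class; apply: p'index_Sylow_sub => p p_pr pi_p.
have [S sylS] := Sylow_exists p (C / N)%G; exists S => //.
apply/subsetP=> y Sy; have p_y := mem_p_elt (pHall_pgroup sylS) Sy.
have /morphimP[a Na Ca def_y] := subsetP (pHall_sub sylS) y Sy.
have Cap : a.`_p \in C by apply: groupX.
rewrite -(constt_p_elt p_y) def_y -morph_constt //.
apply: coset_p'class_center; first exact: subsetP sCG _ Cap.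
apply: pi'class Cap _ _; first exact: pi_pnat (p_elt_constt p a) pi_p.
by have [e ->] := p_natP (p_elt_constt p a); exists p, e.
Qed.

Lemma center_pcore_quotient_pHall (A B : {group gT}) :
  A * B = G -> pi_ppow_p'class (A :|: B) -> pi.-Hall(Gbar) 'Z(Mbar).
Proof.
move=> defG pi'class.
have sAG : A \subset G by rewrite -defG mulG_subl.
have sBG : B \subset G by rewrite -defG mulG_subr.
have nsZG : 'Z(Mbar) <| Gbar := gFnormal_trans _ (pcore_normal _ _).
apply/and3P; split.
- exact: subset_trans (center_sub _) (pcore_sub _ _).
- exact: pgroupS (center_sub _) (pcore_pgroup _ _).
apply: (pnat_index_mul_normal (X := (A / N)%G) (Y := (B / N)%G)) nsZG _ _.
- by rewrite -quotientMl ?defG // (subset_trans sAG) ?gFnorm.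
- apply: p'index_center_pcore_quotient sAG _ => x Ax.
  by apply: pi'class; rewrite inE Ax.
apply: p'index_center_pcore_quotient sBG _ => x Bx.
by apply: pi'class; rewrite inE Bx orbT.
Qed.

Lemma pcore_quotient_abelian_Hall (H : {group gT}) :
  pi.-Hall(G) H -> abelian H -> Mbar = H / N.
Proof.
move=> hallH abH.
have nNH : H \subset 'N(N) := subset_trans (pHall_sub hallH) (gFnorm _ G).
have hallHbar : pi.-Hall(Gbar) (H / N) := quotient_pHall nNH hallH.
have sMH : Mbar \subset H / N := pcore_sub_Hall hallHbar.
apply/eqP; rewrite eqEsubset sMH /=.
apply: subset_trans cent_pcore_quotient_sub; rewrite subsetI (pHall_sub hallHbar).
exact: subset_trans (quotient_abelian _ abH) (centS sMH).
Qed.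

Lemma abelian_pHall_of_p'class (A B H : {group gT}) :
  A * B = G -> pi_ppow_p'class (A :|: B) -> pi.-Hall(G) H -> abelian H.
Proof.
move=> defG pi'class hallH.
have nNH : H \subset 'N(N) := subset_trans (pHall_sub hallH) (gFnorm _ G).
have hallZ := center_pcore_quotient_pHall defG pi'class.
have nsZG : 'Z(Mbar) <| Gbar := gFnormal_trans _ (pcore_normal _ _).
apply: abelian_coprime_quotient nNH _.
  by rewrite coprime_sym (pnat_coprime (pHall_pgroup hallH) (pcore_pgroup _ _)).
apply: abelianS (center_abelian Mbar).
rewrite (sub_normal_Hall hallZ nsZG) ?quotientS ?(pHall_sub hallH) //.
exact: quotient_pgroup (pHall_pgroup hallH).
Qed.

Lemma p'class_abelian_pHall :
    (forall H : {group gT}, pi.-Hall(G) H -> abelian H) ->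
  forall x, x \in G -> pi.-elt x -> pi^'.-nat #|x ^: G|.
Proof.
move=> abH x Gx pi_x; have [H hallH] := pi_length_Hall_exists lenG.
have nNG : G \subset 'N(N) := gFnorm _ G.
have nNH := subset_trans (pHall_sub hallH) nNG.
have defM := pcore_quotient_abelian_Hall hallH (abH H hallH).
have hallM : pi.-Hall(Gbar) Mbar by rewrite defM quotient_pHall.
have NHx : x \in N * H.
  rewrite -quotientK // -defM; apply: mem_morphpre; first exact: subsetP nNG x Gx.
  rewrite /= (mem_normal_Hall hallM (pcore_normal _ _)) ?mem_quotient //.
  by rewrite morph_p_elt // (subsetP nNG).
have [y Ny xHy] :=
  pi_elt_mem_conj (pcore_pgroup _ _) (pHall_pgroup hallH) nNH pi_x NHx.
have hallHy : pi.-Hall(G) (H :^ y) by rewrite pHallJ ?(subsetP (pcore_sub _ G) y Ny).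
have sHyC : H :^ y \subset 'C_G[x].
  by rewrite subsetI (pHall_sub hallHy) sub_cent1 (subsetP (abH _ hallHy)).
rewrite -index_cent1; apply: pnat_dvd (indexgS G sHyC) _.
by have [] := and3P hallHy.
Qed.

End AbelianHall.

Theorem mainTheorem5 (pi : nat_pred) (gT : finGroupType) (G A B : {group gT}) :
  A * B = G ->
  pi_separable pi G ->
  ((forall x, x \in A :|: B -> pi.-elt x ->
      (exists p e, prime p /\ #[x] = (p ^ e)%N) ->
      pi^'.-nat #|x ^: G|)
   <-> (forall H : {group gT}, pi.-Hall(G) H -> abelian H))
  /\ ((forall H : {group gT}, pi.-Hall(G) H -> abelian H) -> pi_length_le pi 1 G).
Proof.
move=> defG /pi_separable_length[n lenG].
have sABG : A :|: B \subset G by rewrite -defG subUset mulG_subl mulG_subr.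
split; first split.
- by move=> pi'class H; exact: (abelian_pHall_of_p'class lenG defG pi'class).
- move=> abH x ABx pi_x _.
  exact: p'class_abelian_pHall lenG abH x (subsetP sABG x ABx) pi_x.
move=> abH; apply: pi_length_le1_pcore_Hall.
have [H hallH] := pi_length_Hall_exists lenG.
rewrite (pcore_quotient_abelian_Hall lenG hallH (abH H hallH)).
exact: quotient_pHall (subset_trans (pHall_sub hallH) (gFnorm _ G)) hallH.
Qed.
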